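(* Let $t_0\in\mathbb R$, $N\in\mathbb N^*$ and $G\in\mathcal A_N([t_0,\infty[)$. Then $$\sup_{t\ge t_0}\Big\{\Big|\int_{t_0}^t\cos(2s)G(s)\,ds\Big|,\ \Big|\int_{t_0}^t\sin(2s)G(s)\,ds\Big|\Big\}<\infty.$$
   Context: For $N\in\mathbb N^*$, $\mathcal A_N([t_0,\infty[)$ is the class of $C^N$ functions $G$ on $[t_0,\infty[$ such that $G^{(N)}\in L^1([t_0,\infty[)$ and $G^{(j)}(t)\to0$ as $t\to\infty$ for $0\le j\le N-1$. *)

From HB Require Import structures.
From mathcomp Require Import all_boot all_order all_algebra.
From mathcomp Require Import all_classical all_reals all_analysis.
Set Implicit Arguments. Unset Strict Implicit. Unset Printing Implicit Defensive.
Import Order.TTheory GRing.Theory Num.Theory.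
Import numFieldNormedType.Exports.
Local Open Scope classical_set_scope.
Local Open Scope ring_scope.

(* The class A_N([t0, oo[): G is C^N on [t0, oo[ (witnessed by the family of
   its successive derivatives g 0 = G, g 1 = G', ..., g N = G^(N), each
   continuous on the closed half-line and g (j+1) the derivative of g j at
   every interior point), G^(N) is Lebesgue integrable on [t0, oo[, and
   G^(j) t -> 0 as t -> +oo for 0 <= j <= N-1. *)
Definition class_A (R : realType) (N : nat) (t0 : R) (G : R -> R) : Prop :=
  exists g : nat -> R -> R,
    (forall t, t0 <= t -> g 0%N t = G t) /\
    (forall j, (j <= N)%N -> {within `[t0, +oo[, continuous (g j)}) /\
    (forall j, (j < N)%N -> forall t, t0 < t -> is_derive t 1 (g j) (g j.+1 t)) /\
    (lebesgue_measure).-integrable `[t0, +oo[ (EFin \o g N) /\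
    (forall j, (j < N)%N -> g j x @[x --> +oo] --> 0).

From HB Require Import structures.
From mathcomp Require Import all_boot all_order all_algebra.
From mathcomp Require Import all_classical all_reals all_analysis.
From mathcomp Require Import measurable_realfun.
Set Implicit Arguments. Unset Strict Implicit. Unset Printing Implicit Defensive.
Import Order.TTheory GRing.Theory Num.Theory.
Import numFieldNormedType.Exports.
Local Open Scope classical_set_scope.
Local Open Scope ring_scope.

(* Integrate by parts against the bounded primitives sin(ws)/w and
   -cos(ws)/w: the oscillatory integrals of G^(j) are controlled by boundary
   terms, bounded because G^(j) is continuous and tends to 0, plus the
   oscillatory integrals of G^(j+1).  Descending from j = N, where
   |cos(ws) G^(N)(s)| <= |G^(N)(s)| is integrable, reaches j = 0. *)

Section Rintegral_subset.
Context d (T : measurableType d) (R : realType) (mu : {measure set T -> \bar R}).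

Lemma Rintegral_norm_le_subset (A B : set T) (f : T -> R) :
  measurable A -> measurable B -> A `<=` B -> mu.-integrable B (EFin \o f) ->
  \int[mu]_(x in A) `|f x| <= \int[mu]_(x in B) `|f x|.
Proof.
move=> mA mB AB fB; have fA := integrableS mB mA AB fB.
have norm_fin D : mu.-integrable D (EFin \o f) ->
    (\int[mu]_(x in D) (`|f x|)%:E \is a fin_num)%E.
  by case/integrableP => _ ?; rewrite ge0_fin_numE ?integral_ge0.
rewrite fine_le ?norm_fin //; apply: ge0_subset_integral => //.
case/integrableP: fB => /measurable_EFinP mf _.
exact/measurable_EFinP/measurableT_comp.
Qed.

End Rintegral_subset.

Section bounded_primitive.
Context {R : realType}.
Notation mu := (@lebesgue_measure R).
Implicit Types (a b : R) (f g h F H : R -> R).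

Definition bounded_primitive (t0 : R) f :=
  exists M, forall t, t0 <= t -> `|\int[mu]_(x in `[t0, t]) f x| <= M.

Lemma subset_itvcc_itvcy a b : `[a, b] `<=` `[a, +oo[.
Proof. exact: subset_itvl. Qed.

Lemma continuous_withinM (A : set R) f g :
  {within A, continuous f} -> {within A, continuous g} ->
  {within A, continuous (fun x => f x * g x)}.
Proof. by move=> cf cg x; exact: continuousM (cf x) (cg x). Qed.

Lemma continuous_itvcy_integrable (t0 t : R) f :
  {within `[t0, +oo[, continuous f} -> mu.-integrable `[t0, t] (EFin \o f).
Proof.
move=> cf; apply: continuous_compact_integrable; first exact: segment_compact.
exact: continuous_subspaceW (@subset_itvcc_itvcy t0 t) cf.
Qed.

Lemma eq_bounded_primitive (t0 : R) f g :
  (forall x, t0 <= x -> f x = g x) -> bounded_primitive t0 f -> bounded_primitive t0 g.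
Proof.
move=> fg [M fM]; exists M => t t0t.
suff <- : \int[mu]_(x in `[t0, t]) f x = \int[mu]_(x in `[t0, t]) g x by exact: fM.
by apply: eq_Rintegral => x; rewrite inE /= in_itv /= => /andP[/fg].
Qed.

Lemma bounded_primitiveZ (t0 c : R) f : {within `[t0, +oo[, continuous f} ->
  bounded_primitive t0 f -> bounded_primitive t0 (fun x => c * f x).
Proof.
move=> cf [M fM]; exists (`|c| * M) => t t0t.
rewrite RintegralZl //; last exact: continuous_itvcy_integrable.
by rewrite normrM ler_wpM2l // fM.
Qed.

Lemma bounded_primitive_integrable (t0 : R) g h :
  {within `[t0, +oo[, continuous g} -> mu.-integrable `[t0, +oo[ (EFin \o g) ->
  continuous h -> (forall x, `|h x| <= 1) -> bounded_primitive t0 (fun x => h x * g x).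
Proof.
move=> cg ig ch h1; exists (\int[mu]_(x in `[t0, +oo[) `|g x|) => t t0t.
have ch' : {within `[t0, +oo[, continuous h} by exact: continuous_subspaceT.
have chg := continuous_withinM ch' cg.
have cnorm f : {within `[t0, +oo[, continuous f} ->
    {within `[t0, +oo[, continuous (fun x => `|f x|)}.
  by move=> cf x; apply: continuous_comp; [exact: cf | exact: norm_continuous].
apply: le_trans (le_normr_Rintegral _ (continuous_itvcy_integrable t chg)) _ => //.
have sub := @subset_itvcc_itvcy t0 t.
apply: le_trans _ (Rintegral_norm_le_subset (mu := mu) _ _ sub ig) => //.
apply: le_Rintegral => //; try exact/continuous_itvcy_integrable/cnorm.
by move=> x _; rewrite normrM ler_piMl.
Qed.

Lemma cvg_continuous_bounded_itvcy (t0 l : R) g :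
  {within `[t0, +oo[, continuous g} -> g x @[x --> +oo] --> l ->
  exists B, forall x, t0 <= x -> `|g x| <= B.
Proof.
move=> cg /cvg_bounded/ex_bound[M [A [_ AM]]].
set c := Order.max A t0.
have t0c : t0 <= c by rewrite le_max lexx orbT.
have cn : {within `[t0, c], continuous (fun x => `|g x|)}.
  move=> x; apply: continuous_comp; last exact: norm_continuous.
  exact: (continuous_subspaceW (@subset_itvcc_itvcy t0 c) cg).
have [m _ mmax] := EVT_max t0c cn.
exists (Order.max M `|g m|) => x t0x.
have [xc|cx] := leP x c.
  by rewrite le_max mmax ?orbT // in_itv /= t0x xc.
by rewrite le_max AM // (le_lt_trans _ cx) // le_max lexx.
Qed.

Lemma Rintegration_by_parts_le F f H h a b : a <= b ->
  {within `[a, b], continuous F} -> {within `[a, b], continuous f} ->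
  {in `]a, b[, forall x : R, is_derive x 1 F (f x)} ->
  (forall x : R, is_derive x 1 H (h x)) -> continuous h ->
  \int[mu]_(x in `[a, b]) (h x * F x) =
  F b * H b - F a * H a - \int[mu]_(x in `[a, b]) (H x * f x).
Proof.
rewrite le_eqVlt => /predU1P[<-|ab] cF cf dF dH ch.
  by rewrite set_itv1 !Rintegral_set1 subrr subr0.
have cH : continuous H.
  by move=> x; apply/differentiable_continuous/derivable1_diffP; case: (dH x).
have LRcont G : {within `[a, b], continuous G} ->
    {in `]a, b[, forall x : R, derivable G x 1} -> derivable_oo_LRcontinuous G a b.
  by move=> /(continuous_within_itvP _ ab)[_ Ga Gb] dG; split.
under eq_Rintegral do rewrite mulrC.
rewrite (@Rintegration_by_parts R F H f h a b ab cf).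
- by congr (_ - _); apply: eq_Rintegral => x _; rewrite mulrC.
- by apply: LRcont => // x /dF[].
- by move=> x /dF[_ Fx]; rewrite derive1E.
- exact: continuous_subspaceT.
- by apply: LRcont; [exact: continuous_subspaceT | move=> x _; case: (dH x)].
- by move=> x _; rewrite derive1E; case: (dH x).
Qed.

Lemma bounded_primitive_by_parts (t0 B C : R) F f H h :
  {within `[t0, +oo[, continuous F} -> {within `[t0, +oo[, continuous f} ->
  (forall x : R, t0 < x -> is_derive x 1 F (f x)) -> (forall x, t0 <= x -> `|F x| <= B) ->
  (forall x : R, is_derive x 1 H (h x)) -> continuous h -> (forall x, `|H x| <= C) ->
  bounded_primitive t0 (fun x => H x * f x) -> bounded_primitive t0 (fun x => h x * F x).
Proof.
move=> cF cf dF FB dH ch HC [M HfM].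
exists (B * C + B * C + M) => t t0t.
have FH x : t0 <= x -> `|F x * H x| <= B * C.
  by move=> t0x; rewrite normrM ler_pM ?FB ?HC.
rewrite (Rintegration_by_parts_le (f := f) t0t) //.
- apply: le_trans (ler_normB _ _) _; rewrite lerD ?HfM //.
  by apply: le_trans (ler_normB _ _) _; rewrite lerD ?FH.
- exact: continuous_subspaceW (@subset_itvcc_itvcy t0 t) cF.
- exact: continuous_subspaceW (@subset_itvcc_itvcy t0 t) cf.
- by move=> x; rewrite in_itv /= => /andP[t0x _]; exact: dF.
Qed.

End bounded_primitive.

Section oscillatory_integrals.
Context {R : realType}.
Notation mu := (@lebesgue_measure R).
Variable w : R.
Hypothesis w_neq0 : w != 0.

Definition oscillatory_bounded (t0 : R) (g : R -> R) :=
  bounded_primitive t0 (fun s => cos (w * s) * g s) /\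
  bounded_primitive t0 (fun s => sin (w * s) * g s).

Lemma continuous_scale (f : R -> R) : continuous f -> continuous (fun s => f (w * s)).
Proof. by move=> cf x; apply: continuous_comp (cf _); exact: mulrl_continuous. Qed.

Lemma is_derive_scale (x : R) : is_derive x 1 ( *%R w) w.
Proof. by have := is_deriveZ w (is_derive_id x 1); rewrite /GRing.scale /= mulr1. Qed.

Lemma is_derive_sin_scale_div (x : R) :
  is_derive x 1 (fun s => w^-1 * sin (w * s)) (cos (w * x)).
Proof.
apply: trigger_derive (is_deriveZ w^-1 (is_derive1_comp _ (is_derive_scale x))) _.
by rewrite /GRing.scale /= mulrCA mulVf // mulr1.
Qed.

Lemma is_derive_cos_scale_div (x : R) :
  is_derive x 1 (fun s => - w^-1 * cos (w * s)) (sin (w * x)).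
Proof.
apply: trigger_derive (is_deriveZ (- w^-1) (is_derive1_comp _ (is_derive_scale x))) _.
by rewrite /GRing.scale /= mulrCA !mulNr mulVf // mulrN mulr1 opprK.
Qed.

Lemma norm_scale_div_le (f : R -> R) : (forall x, `|f x| <= 1) ->
  forall s, `|w^-1 * f (w * s)| <= `|w|^-1.
Proof. by move=> f1 s; rewrite normrM normfV ler_piMr. Qed.

Lemma oscillatory_bounded_integrable (t0 : R) (g : R -> R) :
  {within `[t0, +oo[, continuous g} -> mu.-integrable `[t0, +oo[ (EFin \o g) ->
  oscillatory_bounded t0 g.
Proof.
move=> cg ig; split; apply: bounded_primitive_integrable => //.
- exact/continuous_scale/continuous_cos.
- by move=> x; exact: cos_max.
- exact/continuous_scale/continuous_sin.
- by move=> x; exact: sin_max.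
Qed.

Lemma oscillatory_bounded_by_parts (t0 B : R) (g g' : R -> R) :
  {within `[t0, +oo[, continuous g} -> {within `[t0, +oo[, continuous g'} ->
  (forall x : R, t0 < x -> is_derive x 1 g (g' x)) ->
  (forall x, t0 <= x -> `|g x| <= B) ->
  oscillatory_bounded t0 g' -> oscillatory_bounded t0 g.
Proof.
move=> cg cg' dg gB [bc bs].
have scaled (f : R -> R) (c : R) : continuous f ->
    bounded_primitive t0 (fun s => f (w * s) * g' s) ->
    bounded_primitive t0 (fun s => c * f (w * s) * g' s).
  move=> cf bf; apply: eq_bounded_primitive (bounded_primitiveZ c _ bf).
    by move=> x _; rewrite mulrA.
  by apply: continuous_withinM cg'; exact/continuous_subspaceT/continuous_scale.
split.
- apply: (bounded_primitive_by_parts (C := `|w|^-1) cg cg' dg gB is_derive_sin_scale_div).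
  + exact/continuous_scale/continuous_cos.
  + exact/norm_scale_div_le/sin_max.
  + exact/scaled/bs/continuous_sin.
- apply: (bounded_primitive_by_parts (C := `|w|^-1) cg cg' dg gB is_derive_cos_scale_div).
  + exact/continuous_scale/continuous_sin.
  + by move=> x; rewrite mulNr normrN; exact/norm_scale_div_le/cos_max.
  + exact/scaled/bc/continuous_cos.
Qed.

Lemma oscillatory_bounded_derivatives (t0 : R) (N : nat) (g : nat -> R -> R) :
  (forall j, (j <= N)%N -> {within `[t0, +oo[, continuous (g j)}) ->
  (forall j, (j < N)%N -> forall t : R, t0 < t -> is_derive t 1 (g j) (g j.+1 t)) ->
  mu.-integrable `[t0, +oo[ (EFin \o g N) ->
  (forall j, (j < N)%N -> g j x @[x --> +oo] --> 0) ->
  forall j, (j <= N)%N -> oscillatory_bounded t0 (g j).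
Proof.
move=> cg dg ig lg j jN; rewrite -(subKn jN).
elim: (N - j)%N (leq_subr j N) => [_|i IH iN].
  by rewrite subn0; exact: oscillatory_bounded_integrable (cg N _) ig.
have kN : (N - i.+1 < N)%N by rewrite ltn_subrL /=; exact: leq_ltn_trans iN.
have [B gB] := cvg_continuous_bounded_itvcy (cg _ (ltnW kN)) (lg _ kN).
apply: (oscillatory_bounded_by_parts (cg _ (ltnW kN)) (cg _ kN) (dg _ kN) gB).
by rewrite subnSK //; exact/IH/ltnW.
Qed.

End oscillatory_integrals.

Theorem lemma4p3 (R : realType) (t0 : R) (N : nat) (G : R -> R) :
  (0 < N)%N -> class_A N t0 G ->
  exists M : R, forall t : R, t0 <= t ->
    `| Rintegral lebesgue_measure `[t0, t] (fun s => cos (2 * s) * G s) | <= M /\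
    `| Rintegral lebesgue_measure `[t0, t] (fun s => sin (2 * s) * G s) | <= M.
Proof.
move=> _ [g [g0 [cg [dg [ig lg]]]]].
have two_neq0 : (2 : R) != 0 by rewrite pnatr_eq0.
have [bc bs] := oscillatory_bounded_derivatives two_neq0 cg dg ig lg (leq0n N).
have [Mc cM] : bounded_primitive t0 (fun s => cos (2 * s) * G s).
  by apply: eq_bounded_primitive bc => x /g0 ->.
have [Ms sM] : bounded_primitive t0 (fun s => sin (2 * s) * G s).
  by apply: eq_bounded_primitive bs => x /g0 ->.
exists (Order.max Mc Ms) => t t0t.
by split; rewrite le_max ?cM ?sM ?orbT.
Qed.
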